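(* Let $N\in\mathbb{N}$ with $N\ge3$ and $n\in\mathbb{N}$ with $n\ge n_N$. Then there is a real $E$ with $|E|\le 0.2\left(\frac{5}{96}\right)^{N/2}n^{-\frac{N+2}{2}}$ such that \[ \frac{e^{\frac{\pi}{3\sqrt2}\sqrt{24n+1}}}{(24n+1)\lambda(n)}=\frac{e^{2\pi\sqrt{\frac n3}}}{8\cdot3^{3/4}\sqrt\pi\,n^{5/4}}\left(\sum_{m=0}^{N+1}\frac{b^*(m)}{n^{\frac m2}}+E\right). \]
   Context: $\lambda(n):=\sqrt{\frac{\pi}{6\sqrt2}\sqrt{24n+1}}$; $n_N:=\left(\frac{3(3N+4)\log(6N+8)}{1.3^2}\right)^4$. For $m\in\mathbb{N}_0$: $e_1(0):=1$, $e_1(m):=\frac{(2m-1)!}{(-96)^m}\sum_{\nu=1}^{m}\frac{(-\pi^2/18)^\nu}{(2\nu-1)!(\nu+m)!(m-\nu)!}$ ($m\ge1$); $o_1(m):=\frac{\pi(2m)!}{24\sqrt3(-96)^m}\sum_{\nu=0}^{m}\frac{(-\pi^2/18)^\nu}{(2\nu)!(m-\nu)!(\nu+m+1)!}$; $e_2(m):=\binom{-5/4}{m}24^{-m}$; $e_1^*(m):=\sum_{k=0}^m e_1(k)e_2(m-k)$, $o_1^*(m):=\sum_{k=0}^m o_1(k)e_2(m-k)$; $b^*(2m):=e_1^*(m)$, $b^*(2m+1):=o_1^*(m)$. *)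

From Stdlib Require Import Reals Lra Lia Arith Factorial.
Open Scope R_scope.

Definition lam (n : nat) : R :=
  sqrt (PI / (6 * sqrt 2) * sqrt (24 * INR n + 1)).

Definition nN (N : nat) : R :=
  (3 * (3 * INR N + 4) * ln (6 * INR N + 8) / (13/10)^2) ^ 4.

(* Finite sum  sum_{k=a}^{b} f k  (empty if b < a) *)
Fixpoint sum_range (a : nat) (len : nat) (f : nat -> R) : R :=
  match len with
  | O => 0
  | S l => f a + sum_range (S a) l f
  end.
Definition sumRR (a b : nat) (f : nat -> R) : R := sum_range a (S b - a) f.

Definition fct (k : nat) : R := INR (fact k).

Definition e1 (m : nat) : R :=
  match m with
  | O => 1
  | S _ =>
    fct (2 * m - 1) / (-96) ^ m *
    sumRR 1 m (fun nu => (- PI ^ 2 / 18) ^ nu /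
                         (fct (2 * nu - 1) * fct (nu + m) * fct (m - nu)))
  end.

Definition o1 (m : nat) : R :=
  PI * fct (2 * m) / (24 * sqrt 3 * (-96) ^ m) *
  sumRR 0 m (fun nu => (- PI ^ 2 / 18) ^ nu /
                       (fct (2 * nu) * fct (m - nu) * fct (nu + m + 1))).

Fixpoint falling (a : R) (m : nat) : R :=
  match m with
  | O => 1
  | S k => falling a k * (a - INR k)
  end.
Definition gbinom (a : R) (m : nat) : R := falling a m / fct m.

Definition e2 (m : nat) : R := gbinom (-5/4) m / 24 ^ m.

Definition e1s (m : nat) : R := sumRR 0 m (fun k => e1 k * e2 (m - k)).
Definition o1s (m : nat) : R := sumRR 0 m (fun k => o1 k * e2 (m - k)).

Definition bstar (m : nat) : R :=
  if Nat.even m then e1s (Nat.div2 m) else o1s (Nat.div2 m).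

From Stdlib Require Import Reals Lra Lia Arith Factorial Machin.
From Coquelicot Require Import Coquelicot.
Open Scope R_scope.

(* With [y = n^(-1/2)], [kappa = 2 pi / sqrt 3] and [w(y) = (sqrt (1 + y^2/24) - 1) / y], the
   left-hand side divided by the prefactor is [(1 + y^2/24)^(-5/4) exp (kappa w(y))].
   Expand the first factor by the binomial series and the second as [sum_j (kappa w)^j / j!],
   where the coefficients of [w^j = sum_i beta(j,i) y^(j+2i)] obey a two-term recursion coming
   from [y w^2 + 2 w = y/24].  Grouped by parity, the coefficient of [y^m] in the Cauchy
   product is [b*(m)].  The Taylor remainders of both factors and of the [w^j] are
   [O(y^(N+3))]; the tail of the product is at most [3.61 (5/96)^(m/2) y^m] termwise, because
   [(5/96)^i (4/5)^i = 24^(-i)] and the parity-restricted exponential sums at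
   [xi = kappa / (24 sqrt (5/96))], [xi^2 = 2 pi^2 / 45], are small.  For [y <= 1/100], which
   [n >= n_N] guarantees, everything adds up to at most [0.2 (5/96)^(N/2) y^(N+2)]. *)

Fixpoint rsum (n : nat) (f : nat -> R) : R :=
  match n with O => 0 | S k => rsum k f + f k end.

Lemma rsum_ext n f g :
  (forall i, (i < n)%nat -> f i = g i) -> rsum n f = rsum n g.
Proof.
induction n as [|n IH]; intros Hfg; simpl; [reflexivity|].
rewrite IH, (Hfg n); [reflexivity|lia|intros; apply Hfg; lia].
Qed.

Lemma rsum_0 n : rsum n (fun _ => 0) = 0.
Proof. induction n as [|n IH]; simpl; [|rewrite IH]; ring. Qed.

Lemma rsum_add n f g : rsum n (fun i => f i + g i) = rsum n f + rsum n g.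
Proof. induction n as [|n IH]; simpl; [|rewrite IH]; ring. Qed.

Lemma rsum_scal_l n c f : rsum n (fun i => c * f i) = c * rsum n f.
Proof. induction n as [|n IH]; simpl; [|rewrite IH]; ring. Qed.

Lemma rsum_scal_r n c f : rsum n (fun i => f i * c) = rsum n f * c.
Proof. induction n as [|n IH]; simpl; [|rewrite IH]; ring. Qed.

Lemma rsum_le n f g :
  (forall i, (i < n)%nat -> f i <= g i) -> rsum n f <= rsum n g.
Proof.
induction n as [|n IH]; intros Hfg; simpl; [lra|].
pose proof (IH (fun i Hi => Hfg i ltac:(lia))); pose proof (Hfg n ltac:(lia)); lra.
Qed.

Lemma rsum_nonneg n f : (forall i, (i < n)%nat -> 0 <= f i) -> 0 <= rsum n f.
Proof. intros Hf; rewrite <- (rsum_0 n); exact (rsum_le n _ _ Hf). Qed.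

Lemma Rabs_rsum_le n f : Rabs (rsum n f) <= rsum n (fun i => Rabs (f i)).
Proof.
induction n as [|n IH]; simpl; [rewrite Rabs_R0; lra|].
eapply Rle_trans; [apply Rabs_triang|lra].
Qed.

Lemma rsum_swap n m (f : nat -> nat -> R) :
  rsum n (fun a => rsum m (fun b => f a b)) = rsum m (fun b => rsum n (fun a => f a b)).
Proof. induction n as [|n IH]; simpl; [now rewrite rsum_0|now rewrite IH, rsum_add]. Qed.

Lemma rsum_add_len a b f : rsum (a + b) f = rsum a f + rsum b (fun i => f (a + i)%nat).
Proof.
induction b as [|b IH]; simpl; [rewrite Nat.add_0_r; ring|].
rewrite Nat.add_succ_r; simpl; rewrite IH; ring.
Qed.

Lemma rsum_S_l n f : rsum (S n) f = f O + rsum n (fun i => f (S i)).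
Proof. induction n as [|n IH]; simpl in *; [|rewrite IH]; ring. Qed.

Lemma rsum_rev n f : rsum n f = rsum n (fun i => f (n - 1 - i)%nat).
Proof.
induction n as [|n IH]; [reflexivity|].
rewrite (rsum_S_l n (fun i => f (S n - 1 - i)%nat)); simpl rsum; rewrite IH, Rplus_comm.
f_equal; [f_equal; lia|apply rsum_ext; intros i Hi; f_equal; lia].
Qed.

Lemma rsum_delta n r g :
  rsum n (fun i => if Nat.eqb i r then g i else 0) = if Nat.ltb r n then g r else 0.
Proof.
induction n as [|n IH]; simpl; [reflexivity|]; rewrite IH.
destruct (Nat.eqb_spec n r), (Nat.ltb_spec r n), (Nat.ltb_spec r (S n)); subst; try lia; ring.
Qed.

Lemma rsum_delta_le J a m g : (forall j, 0 <= g j) ->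
  rsum J (fun j => if Nat.eqb (j + a) m then g j else 0)
  <= if Nat.leb a m then g (m - a)%nat else 0.
Proof.
intros Hg; rewrite (rsum_ext J _ (fun j =>
  if Nat.eqb j (m - a) then (if Nat.leb a m then g j else 0) else 0)).
- rewrite rsum_delta; destruct (Nat.ltb _ J), (Nat.leb a m); try lra; apply Hg.
- intros j _; destruct (Nat.eqb_spec (j + a) m), (Nat.eqb_spec j (m - a)), (Nat.leb_spec a m);
    subst; try lia; reflexivity.
Qed.

Lemma rsum_even_odd n f :
  rsum (2 * n) f = rsum n (fun k => f (2 * k)%nat) + rsum n (fun k => f (2 * k + 1)%nat).
Proof.
induction n as [|n IH]; [simpl; ring|].
replace (2 * S n)%nat with (S (S (2 * n))) by lia; cbn [rsum]; rewrite IH.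
replace (S (2 * n)) with (2 * n + 1)%nat by lia; ring.
Qed.

Lemma rsum_trunc n B f :
  (n <= B)%nat -> rsum B (fun i => if Nat.ltb i n then f i else 0) = rsum n f.
Proof.
intros HnB; replace B with (n + (B - n))%nat by lia; rewrite rsum_add_len.
rewrite (rsum_ext n _ f), (rsum_ext (B - n) _ (fun _ => 0)), rsum_0; [ring| |].
- intros i _; destruct (Nat.ltb_spec (n + i) n); [lia|reflexivity].
- intros i Hi; destruct (Nat.ltb_spec i n); [reflexivity|lia].
Qed.

Lemma rsum_trunc_le n B f :
  (forall i, 0 <= f i) -> rsum B (fun i => if Nat.ltb i n then f i else 0) <= rsum n f.
Proof.
intros Hf; destruct (Nat.le_gt_cases n B) as [HnB|HBn].
- rewrite rsum_trunc by exact HnB; lra.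
- rewrite (rsum_ext B _ f) by (intros i Hi; destruct (Nat.ltb_spec i n); [reflexivity|lia]).
  replace n with (B + (n - B))%nat by lia; rewrite rsum_add_len.
  pose proof (rsum_nonneg (n - B) (fun i => f (B + i)%nat) (fun i _ => Hf _)); lra.
Qed.

Lemma rsum_term_le n f i :
  (forall j, 0 <= f j) -> (i < n)%nat -> f i <= rsum n f.
Proof.
intros Hf Hi; replace n with (S i + (n - S i))%nat by lia; rewrite rsum_add_len; simpl.
pose proof (rsum_nonneg i f (fun j _ => Hf j)).
pose proof (rsum_nonneg (n - S i) (fun j => f (S (i + j))) (fun j _ => Hf _)); lra.
Qed.

Lemma sum_range_rsum a len f : sum_range a len f = rsum len (fun i => f (a + i)%nat).
Proof.
revert a; induction len as [|len IH]; intros a; [reflexivity|].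
rewrite rsum_S_l; simpl; rewrite IH, Nat.add_0_r.
f_equal; apply rsum_ext; intros; f_equal; lia.
Qed.

Lemma sum_f_R0_rsum g K : sum_f_R0 g K = rsum (S K) g.
Proof. induction K as [|K IH]; simpl in *; [ring|now rewrite IH]. Qed.

Lemma rsum_geom_le n q : 0 <= q < 1 -> rsum n (fun i => q ^ i) <= / (1 - q).
Proof.
intros Hq.
assert (Htel : rsum n (fun i => q ^ i) * (1 - q) = 1 - q ^ n).
{ induction n as [|n IH]; simpl; [ring|]. rewrite Rmult_plus_distr_r, IH; ring. }
pose proof (pow_le q n (proj1 Hq)).
apply (Rmult_le_reg_r (1 - q)); [lra|]. rewrite Htel, Rinv_l by lra. lra.
Qed.

Lemma fct_pos n : 0 < fct n.
Proof. apply lt_0_INR, lt_O_fact. Qed.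

Lemma fct_S n : fct (S n) = INR (S n) * fct n.
Proof. unfold fct; rewrite fact_simpl, mult_INR; reflexivity. Qed.

Lemma Derive_n_Rpower (a : R) (k : nat) t : 0 < t ->
  Derive_n (fun t => Rpower t a) k t = falling a k * Rpower t (a - INR k)
  /\ ex_derive_n (fun t => Rpower t a) k t.
Proof.
revert t; induction k as [|k IH]; intros t Ht.
- simpl; split; [|exact I]. replace (a - 0) with a by ring; ring.
- assert (Hloc : locally t (fun s =>
    Derive_n (fun t => Rpower t a) k s = falling a k * Rpower s (a - INR k))).
  { apply (filter_imp (fun s => 0 < s)); [intros s Hs; apply (IH s Hs)|apply (open_gt 0 t Ht)]. }
  assert (Hd : is_derive (fun s => falling a k * Rpower s (a - INR k)) t
                 (falling a k * ((a - INR k) * Rpower t (a - INR k - 1)))).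
  { apply is_derive_scal, is_derive_Reals, derivable_pt_lim_power, Ht. }
  split.
  + cbn [Derive_n falling]; rewrite (Derive_ext_loc _ _ _ Hloc).
    transitivity (falling a k * ((a - INR k) * Rpower t (a - INR k - 1)));
      [apply is_derive_unique, Hd|].
    rewrite S_INR; replace (a - (INR k + 1)) with (a - INR k - 1) by ring; ring.
  + simpl; apply (ex_derive_ext_loc _ _ _ (filter_imp _ _ (fun s H => eq_sym H) Hloc)).
    eexists; exact Hd.
Qed.

(* In the Lagrange remainder [binom(a,K+1) u^(K+1) z^(a-K-1)] we have [1 < z] and
   [a <= K + 1], so [z^(a-K-1) <= 1]. *)
Lemma binomial_taylor_le a u K : 0 < u -> a <= INR (S K) ->
  Rabs (Rpower (1 + u) a - rsum (S K) (fun k => gbinom a k * u ^ k))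
  <= Rabs (gbinom a (S K)) * u ^ (S K).
Proof.
intros Hu Ha.
destruct (Taylor_Lagrange (fun t => Rpower t a) K 1 (1 + u)) as [z [Hz Heq]]; [lra| |].
{ intros t Ht k _; apply (Derive_n_Rpower a k t); lra. }
replace (1 + u - 1) with u in Heq by ring.
rewrite Heq, sum_f_R0_rsum, (proj1 (Derive_n_Rpower a (S K) z ltac:(lra))).
rewrite (rsum_ext _ _ (fun k => gbinom a k * u ^ k)).
2:{ intros i _; rewrite (proj1 (Derive_n_Rpower a i 1 ltac:(lra))).
    unfold Rpower; rewrite ln_1, Rmult_0_r, exp_0.
    unfold gbinom; pose proof (fct_pos i); unfold fct in *; field; lra. }
assert (Hz1 : 0 < Rpower z (a - INR (S K)) <= 1).
{ split; [apply exp_pos|]. unfold Rpower; rewrite <- exp_0.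
  assert (0 < ln z) by (rewrite <- ln_1; apply ln_increasing; lra).
  destruct (Rle_lt_or_eq_dec ((a - INR (S K)) * ln z) 0) as [Hlt|Heq0]; [nra| |].
  - left; apply exp_increasing, Hlt.
  - rewrite Heq0; lra. }
replace (_ + _ - _) with (gbinom a (S K) * u ^ S K * Rpower z (a - INR (S K)))
  by (unfold gbinom, fct; field; apply not_0_INR, fact_neq_0).
rewrite !Rabs_mult, (Rabs_pos_eq (u ^ S K)), (Rabs_pos_eq (Rpower _ _))
  by (apply pow_le || idtac; lra).
pose proof (Rabs_pos (gbinom a (S K))); pose proof (pow_le u (S K) ltac:(lra)).
rewrite <- (Rmult_1_r (_ * u ^ S K)) at 2; apply Rmult_le_compat_l; [nra|lra].
Qed.

Lemma exp_taylor_le x K : 0 < x ->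
  0 <= exp x - rsum (S K) (fun j => x ^ j / fct j) <= x ^ (S K) / fct (S K) * exp x.
Proof.
intros Hx.
pose proof (exp_ge_taylor x K ltac:(lra)) as Hge; rewrite sum_f_R0_rsum in Hge.
split; [unfold fct; lra|].
destruct (Taylor_Lagrange exp K 0 x) as [z [Hz Heq]]; [lra| |].
{ intros t _ k _; apply (ex_derive_n_ext_loc exp exp); [apply filter_forall; reflexivity|].
  destruct k; [exact I|]. eexists; apply (is_derive_n_exp (S k) t). }
assert (HD : forall m t, Derive_n exp m t = exp t)
  by (intros; apply is_derive_n_unique, is_derive_n_exp).
rewrite sum_f_R0_rsum, HD, Rminus_0_r in Heq.
rewrite (rsum_ext _ _ (fun j => x ^ j / fct j)) in Heq
  by (intros; rewrite HD, exp_0; unfold fct; ring).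
rewrite Heq at 1; unfold Rminus; rewrite Rplus_comm, <- Rplus_assoc, Rplus_opp_l, Rplus_0_l.
pose proof (fct_pos (S K)); pose proof (pow_lt x (S K) Hx).
assert (exp z <= exp x) by (left; apply exp_increasing; lra).
unfold fct in *. apply Rmult_le_compat_l; [apply Rlt_le, Rdiv_lt_0_compat|]; lra.
Qed.

Lemma gbinom_0 a : gbinom a 0 = 1.
Proof. unfold gbinom, fct; simpl; field. Qed.

Lemma gbinom_S a m : gbinom a (S m) = gbinom a m * (a - INR m) / INR (S m).
Proof.
unfold gbinom; rewrite fct_S; simpl falling.
pose proof (fct_pos m); pose proof (lt_0_INR (S m) ltac:(lia)); field; lra.
Qed.

Lemma Rabs_gbinom_S_le a k : 0 <= a <= 1 -> Rabs (gbinom a (S k)) <= a.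
Proof.
intros Ha; induction k as [|k IH].
- rewrite gbinom_S, gbinom_0; simpl; rewrite Rabs_pos_eq; lra.
- rewrite gbinom_S; unfold Rdiv; rewrite !Rabs_mult, Rabs_inv.
  pose proof (pos_INR k); rewrite !S_INR, (Rabs_pos_eq (INR k + 1 + 1)) by lra.
  assert (Hq : Rabs (a - (INR k + 1)) * / (INR k + 1 + 1) <= 1).
  { apply (Rmult_le_reg_r (INR k + 1 + 1)); [lra|].
    rewrite Rmult_assoc, Rinv_l, Rmult_1_r, Rmult_1_l by lra; apply Rabs_le; lra. }
  pose proof (Rabs_pos (gbinom a (S k))); pose proof (Rabs_pos (a - (INR k + 1))).
  pose proof (Rinv_0_lt_compat (INR k + 1 + 1) ltac:(lra)); nra.
Qed.

Lemma Rabs_gbinom_neg_le a k : a <= -1 -> Rabs (gbinom a k) <= (- a) ^ k.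
Proof.
intros Ha; induction k as [|k IH].
- rewrite gbinom_0, Rabs_R1; simpl; lra.
- rewrite gbinom_S; unfold Rdiv; rewrite !Rabs_mult, Rabs_inv; simpl pow.
  pose proof (pos_INR k); rewrite S_INR, (Rabs_pos_eq (INR k + 1)) by lra.
  assert (Hq : Rabs (a - INR k) * / (INR k + 1) <= - a).
  { apply (Rmult_le_reg_r (INR k + 1)); [lra|].
    rewrite Rmult_assoc, Rinv_l by lra; rewrite Rabs_left1; nra. }
  pose proof (Rabs_pos (gbinom a k)); pose proof (Rabs_pos (a - INR k)).
  pose proof (Rinv_0_lt_compat (INR k + 1) ltac:(lra)); nra.
Qed.

Lemma Rabs_e2_le k : Rabs (e2 k) <= (5 / 96) ^ k.
Proof.
unfold e2, Rdiv; rewrite Rabs_mult, Rabs_inv, (Rabs_pos_eq (24 ^ k)) by (apply pow_le; lra).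
replace ((5 * / 96) ^ k) with ((- (-5 / 4)) ^ k * / 24 ^ k)
  by (rewrite <- pow_inv, <- Rpow_mult_distr; f_equal; field).
apply Rmult_le_compat_r; [left; apply Rinv_0_lt_compat, pow_lt; lra|].
apply Rabs_gbinom_neg_le; lra.
Qed.

(** * Powers of the exponent [w(y)] *)

Definition wfun (y : R) : R := (sqrt (1 + y ^ 2 / 24) - 1) / y.

Lemma wfun_spec y : 0 < y ->
  0 < wfun y <= y / 48 /\ wfun y ^ 2 = / 24 - 2 * wfun y / y.
Proof.
intros Hy; set (s := sqrt (1 + y ^ 2 / 24)).
assert (Hu : 0 < y ^ 2 / 24) by (apply Rdiv_lt_0_compat; [apply pow_lt|]; lra).
assert (Hs2 : s ^ 2 = 1 + y ^ 2 / 24) by (unfold s; rewrite <- Rsqr_pow2; apply Rsqr_sqrt; lra).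
assert (Hs1 : 1 < s).
{ unfold s; rewrite <- sqrt_1 at 1; apply sqrt_lt_1; lra. }
assert (Hs : s - 1 = (y ^ 2 / 24) / (s + 1))
  by (replace (y ^ 2 / 24) with (s ^ 2 - 1) by lra; field; lra).
unfold wfun; fold s; split; [split|].
- apply Rdiv_lt_0_compat; lra.
- rewrite Hs; apply (Rmult_le_reg_r y); [lra|].
  replace (y ^ 2 / 24 / (s + 1) / y * y) with (y ^ 2 / 24 / (s + 1)) by (field; lra).
  replace (y / 48 * y) with (y ^ 2 / 24 / 2) by field.
  apply Rmult_le_compat_l; [lra|]; apply Rinv_le_contravar; lra.
- apply (Rmult_eq_reg_r (y ^ 2)); [|apply pow_nonzero; lra].
  field_simplify; [|lra|lra]. rewrite Hs2; field.
Qed.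

(** The coefficient of [y^(j + 2 i)] in [w(y)^j]. *)
Definition wcoef (j i : nat) : R :=
  match j with
  | O => if Nat.eqb i 0 then 1 else 0
  | S j' => INR j * fct (j' + 2 * i) / (fct i * fct (j + i)) * (-24) ^ i / 48 ^ (j + 2 * i)
  end.

Lemma wcoef_0_r j : wcoef j 0 = / 48 ^ j.
Proof.
destruct j as [|j]; cbn [wcoef Nat.eqb]; [simpl; field|].
rewrite Nat.mul_0_r, !Nat.add_0_r, fct_S.
pose proof (fct_pos j); pose proof (lt_0_INR (S j) ltac:(lia)).
assert (48 ^ S j <> 0) by (apply pow_nonzero; lra).
change (fct 0) with 1; simpl (_ ^ 0); field; lra.
Qed.

Ltac expand_fct := repeat rewrite fct_S; rewrite ?S_INR, ?plus_INR, ?mult_INR, ?INR_0.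

Lemma wcoef_SS j i : wcoef (S (S j)) i = wcoef j (S i) / 24 - 2 * wcoef (S j) (S i).
Proof.
assert (H24 : (-24) ^ S i = -24 * (-24) ^ i) by reflexivity.
assert (Hi : 0 <= INR i) by apply pos_INR.
destruct j as [|j]; cbn [wcoef Nat.eqb]; rewrite H24.
- replace (S (S 0) + 2 * i)%nat with (2 + 2 * i)%nat by lia.
  replace (S 0 + 2 * S i)%nat with (3 + 2 * i)%nat by lia.
  rewrite !pow_add. set (P := 48 ^ (2 * i)); assert (0 < P) by (apply pow_lt; lra).
  replace (1 + 2 * i)%nat with (S (2 * i)) by lia.
  replace (0 + 2 * S i)%nat with (S (S (2 * i))) by lia.
  replace (S (S 0) + i)%nat with (S (S i)) by lia.
  replace (S 0 + S i)%nat with (S (S i)) by lia.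
  pose proof (fct_pos (2 * i)); pose proof (fct_pos i).
  expand_fct; simpl; field; repeat split; lra.
- replace (S (S (S j)) + 2 * i)%nat with (3 + (j + 2 * i))%nat by lia.
  replace (S j + 2 * S i)%nat with (3 + (j + 2 * i))%nat by lia.
  replace (S (S j) + 2 * S i)%nat with (4 + (j + 2 * i))%nat by lia.
  rewrite (pow_add 48 3), (pow_add 48 4).
  set (P := 48 ^ (j + 2 * i)); assert (0 < P) by (apply pow_lt; lra).
  replace (S (S j) + 2 * i)%nat with (S (S (j + 2 * i))) by lia.
  replace (j + 2 * S i)%nat with (S (S (j + 2 * i))) by lia.
  replace (S j + 2 * S i)%nat with (S (S (S (j + 2 * i)))) by lia.
  replace (S (S (S j)) + i)%nat with (S (S (S (j + i)))) by lia.
  replace (S j + S i)%nat with (S (S (j + i))) by lia.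
  replace (S (S j) + S i)%nat with (S (S (S (j + i)))) by lia.
  pose proof (fct_pos (j + 2 * i)); pose proof (fct_pos i); pose proof (fct_pos (j + i)).
  pose proof (pos_INR j). expand_fct; simpl; expand_fct; field; repeat split; lra.
Qed.

Lemma gbinom_half_wcoef i : gbinom (/ 2) (S i) = wcoef 1 i * 24 ^ S i.
Proof.
induction i as [|i IH]; [rewrite gbinom_S, gbinom_0, wcoef_0_r; simpl; field|].
rewrite gbinom_S, IH; cbn [wcoef].
replace (1 + 2 * S i)%nat with (2 + (1 + 2 * i))%nat by lia.
replace (0 + 2 * S i)%nat with (S (S (0 + 2 * i))) by lia.
replace (1 + S i)%nat with (S (1 + i)) by lia.
rewrite pow_add. set (P := 48 ^ (1 + 2 * i)); assert (0 < P) by (apply pow_lt; lra).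
assert (H24 : (-24) ^ S i = -24 * (-24) ^ i) by reflexivity.
rewrite H24, <- (tech_pow_Rmult 24 (S i)).
pose proof (fct_pos (0 + 2 * i)); pose proof (fct_pos i); pose proof (fct_pos (1 + i)).
pose proof (pos_INR i). expand_fct; simpl; expand_fct.
field; repeat split; (apply pow_nonzero; lra) || lra.
Qed.

Definition wpow_trunc (y : R) (j K : nat) : R := rsum K (fun i => wcoef j i * y ^ (j + 2 * i)).

Definition wpow_rem (y : R) (j K : nat) : R := wfun y ^ j - wpow_trunc y j K.

Lemma wpow_trunc_0 y K : wpow_trunc y 0 (S K) = 1.
Proof.
unfold wpow_trunc; rewrite rsum_S_l, (rsum_ext _ _ (fun _ => 0)), rsum_0.
- simpl; ring.
- intros i _; simpl; ring.
Qed.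

Lemma wpow_trunc_SS y j K : 0 < y ->
  wpow_trunc y (S (S j)) K = wpow_trunc y j (S K) / 24 - 2 * wpow_trunc y (S j) (S K) / y.
Proof.
intros Hy; unfold wpow_trunc; rewrite !rsum_S_l, !wcoef_0_r.
replace (rsum K _) with (rsum K (fun i => wcoef j (S i) * y ^ (j + 2 * S i) * / 24
                          + wcoef (S j) (S i) * y ^ (S j + 2 * S i) * (-2 / y))).
- rewrite rsum_add, !rsum_scal_r, !Nat.add_0_r.
  assert (48 ^ j <> 0) by (apply pow_nonzero; lra). simpl pow; field; lra.
- apply rsum_ext; intros i _; rewrite wcoef_SS.
  replace (j + 2 * S i)%nat with (S (S j) + 2 * i)%nat by lia.
  replace (S j + 2 * S i)%nat with (S (S (S j) + 2 * i)) by lia.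
  rewrite <- (tech_pow_Rmult y (S (S j) + 2 * i)); field; lra.
Qed.

Lemma wpow_rem_SS y j K : 0 < y ->
  wpow_rem y (S (S j)) K = wpow_rem y j (S K) / 24 - 2 * wpow_rem y (S j) (S K) / y.
Proof.
intros Hy; unfold wpow_rem; rewrite wpow_trunc_SS by lra.
replace (wfun y ^ S (S j)) with (wfun y ^ j * wfun y ^ 2) by (simpl; ring).
rewrite (proj2 (wfun_spec y Hy)); simpl pow; field; lra.
Qed.

Lemma pow_sqr_div y b n : (y ^ 2 / b) ^ n = y ^ (2 * n) / b ^ n.
Proof. unfold Rdiv; rewrite Rpow_mult_distr, pow_inv, pow_mult; reflexivity. Qed.

Lemma wpow_trunc_1 y K : 0 < y ->
  y * wpow_trunc y 1 K = rsum K (fun i => gbinom (/ 2) (S i) * (y ^ 2 / 24) ^ S i).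
Proof.
intros Hy; unfold wpow_trunc; rewrite <- rsum_scal_l; apply rsum_ext; intros i _.
rewrite gbinom_half_wcoef, pow_sqr_div.
replace (2 * S i)%nat with (S (1 + 2 * i)) by lia.
rewrite <- (tech_pow_Rmult y (1 + 2 * i)).
assert (24 ^ S i <> 0) by (apply pow_nonzero; lra). field; auto.
Qed.

Lemma Rabs_wpow_rem_1_le y K : 0 < y -> Rabs (wpow_rem y 1 K) <= y / 48 * (y ^ 2 / 24) ^ K.
Proof.
intros Hy.
assert (Hu : 0 < y ^ 2 / 24) by (apply Rdiv_lt_0_compat; [apply pow_lt|]; lra).
pose proof (binomial_taylor_le (/ 2) _ K Hu ltac:(rewrite S_INR; pose proof (pos_INR K); lra))
  as HT.
rewrite Rpower_sqrt, rsum_S_l, gbinom_0, pow_O, <- wpow_trunc_1 in HT by lra.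
pose proof (Rabs_gbinom_S_le (/ 2) K ltac:(lra)).
set (u := y ^ 2 / 24) in *.
unfold wpow_rem, wfun; fold u; rewrite pow_1.
replace ((sqrt (1 + u) - 1) / y - wpow_trunc y 1 K)
  with ((sqrt (1 + u) - (1 * 1 + y * wpow_trunc y 1 K)) / y) by (field; lra).
unfold Rdiv at 1; rewrite Rabs_mult, Rabs_inv, (Rabs_pos_eq y) by lra.
apply (Rmult_le_reg_r y); [lra|]; rewrite Rmult_assoc, Rinv_l, Rmult_1_r by lra.
replace (y / 48 * u ^ K * y) with (/ 2 * u ^ S K) by (unfold u; simpl; field).
eapply Rle_trans; [exact HT|]; apply Rmult_le_compat_r; [apply pow_le|]; lra.
Qed.

(* The ratio [y/9], weaker than the [y/48] of [Rabs_wpow_rem_1_le], is what makes the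
   recursion [wpow_rem_SS] close: [1/576 + 2/(9 * 24) <= 1/81]. *)
Lemma wpow_rem_step_le y a b r0 r1 : 0 < y -> 0 <= a -> 0 <= b ->
  Rabs r0 <= a * (y ^ 2 / 24 * b) -> Rabs r1 <= y / 9 * a * (y ^ 2 / 24 * b) ->
  Rabs (r0 / 24 - 2 * r1 / y) <= y / 9 * (y / 9 * a) * b.
Proof.
intros Hy Ha Hb H0 H1.
assert (Hab : 0 <= a * b * y ^ 2) by (apply Rmult_le_pos; [nra|apply pow2_ge_0]).
assert (H1' : Rabs (r1 / y) <= a * b * y ^ 2 / 216).
{ unfold Rdiv at 1; rewrite Rabs_mult, Rabs_inv, (Rabs_pos_eq y) by lra.
  apply (Rmult_le_reg_r y); [lra|]; rewrite Rmult_assoc, Rinv_l by lra.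
  replace (a * b * y ^ 2 / 216 * y) with (y / 9 * a * (y ^ 2 / 24 * b)) by field; lra. }
replace (r0 / 24 - 2 * r1 / y) with (r0 / 24 - 2 * (r1 / y)) by (field; lra).
replace (a * (y ^ 2 / 24 * b)) with (a * b * y ^ 2 / 24) in H0 by field.
replace (y / 9 * (y / 9 * a) * b) with (a * b * y ^ 2 / 81) by (simpl; field).
apply Rabs_le_between in H0; apply Rabs_le_between in H1'; apply Rabs_le; lra.
Qed.

Lemma Rabs_wpow_rem_le y j K : 0 < y ->
  Rabs (wpow_rem y j K) <= (y / 9) ^ j * (y ^ 2 / 24) ^ K.
Proof.
intros Hy.
assert (Hu : 0 <= y ^ 2 / 24) by (apply Rmult_le_pos; [apply pow2_ge_0|lra]).
revert K; induction j as [j IH] using lt_wf_ind; intros K.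
destruct j as [|[|j]].
- unfold wpow_rem; rewrite pow_O, Rmult_1_l; destruct K as [|K].
  + simpl; rewrite Rminus_0_r, Rabs_R1; lra.
  + rewrite wpow_trunc_0, Rminus_diag, Rabs_R0; apply pow_le; lra.
- eapply Rle_trans; [apply Rabs_wpow_rem_1_le, Hy|].
  rewrite pow_1; apply Rmult_le_compat_r; [apply pow_le|]; lra.
- rewrite wpow_rem_SS by exact Hy.
  rewrite <- (tech_pow_Rmult (y / 9) (S j)), <- (tech_pow_Rmult (y / 9) j).
  apply wpow_rem_step_le; [exact Hy|apply pow_le; lra|apply pow_le; exact Hu| |].
  + rewrite tech_pow_Rmult; apply IH; lia.
  + rewrite !tech_pow_Rmult; apply IH; lia.
Qed.

(** * The coefficients [b*(m)] as a Cauchy product *)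

Definition kappa : R := 2 * PI / sqrt 3.

Definition expcoef (j i : nat) : R := kappa ^ j / fct j * wcoef j i.

Lemma sqrt3_pos : 0 < sqrt 3.
Proof. apply sqrt_lt_R0; lra. Qed.

Lemma kappa_sq : kappa ^ 2 = 4 * PI ^ 2 / 3.
Proof.
unfold kappa; pose proof sqrt3_pos; pose proof (sqrt_sqrt 3 ltac:(lra)).
replace ((2 * PI / sqrt 3) ^ 2) with (4 * PI ^ 2 / (sqrt 3 * sqrt 3)) by (simpl; field; lra).
congruence.
Qed.

(* [4 pi^2 / 3 = (-pi^2/18) q] and [-24 = q] with [q = 48^2 / (-96)]. *)
Lemma kappa_pow_scale nu d :
  kappa ^ (2 * nu) * (-24) ^ d / 48 ^ (2 * (nu + d)) = (- PI ^ 2 / 18) ^ nu / (-96) ^ (nu + d).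
Proof.
set (q := 48 ^ 2 / (-96)).
rewrite !pow_mult, kappa_sq, !pow_add.
replace (4 * PI ^ 2 / 3) with (- PI ^ 2 / 18 * q) by (unfold q; field).
replace (-24) with q by (unfold q; field).
rewrite Rpow_mult_distr; unfold q, Rdiv; rewrite !Rpow_mult_distr, !pow_inv.
field; repeat split; apply pow_nonzero; simpl; lra.
Qed.

(** The coefficient of [y^(2q + r)] in [exp(kappa w(y))], for [r = 0, 1]. *)
Definition parity_coef (r q : nat) : R := rsum (S q) (fun nu => expcoef (2 * nu + r) (q - nu)).

Lemma expcoef_even nu q : (1 <= nu <= q)%nat ->
  expcoef (2 * nu) (q - nu) = fct (2 * q - 1) / (-96) ^ q *
    ((- PI ^ 2 / 18) ^ nu / (fct (2 * nu - 1) * fct (nu + q) * fct (q - nu))).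
Proof.
intros Hnu; destruct nu as [|n]; [lia|].
destruct (Nat.le_exists_sub (S n) q ltac:(lia)) as [d [-> _]].
replace (d + S n - S n)%nat with d by lia.
unfold expcoef; replace (2 * S n)%nat with (S (S (2 * n))) by lia; cbn [wcoef].
replace (S (2 * n) + 2 * d)%nat with (2 * (d + S n) - 1)%nat by lia.
replace (S (S (2 * n)) + d)%nat with (S n + (d + S n))%nat by lia.
replace (S (S (2 * n)) + 2 * d)%nat with (2 * (S n + d))%nat by lia.
replace (S (S (2 * n)) - 1)%nat with (S (2 * n)) by lia.
pose proof (kappa_pow_scale (S n) d) as Hk.
replace (2 * S n)%nat with (S (S (2 * n))) in Hk by lia.
replace (S n + d)%nat with (d + S n)%nat in * by lia.
rewrite fct_S.
pose proof (fct_pos (S (2 * n))); pose proof (fct_pos (S n + (d + S n))); pose proof (fct_pos d).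
pose proof (lt_0_INR (S (S (2 * n))) ltac:(lia)).
assert (48 ^ (2 * (d + S n)) <> 0) by (apply pow_nonzero; lra).
assert ((-96) ^ (d + S n) <> 0) by (apply pow_nonzero; lra).
replace ((- PI ^ 2 / 18) ^ S n)
  with (kappa ^ S (S (2 * n)) * (-24) ^ d / 48 ^ (2 * (d + S n)) * (-96) ^ (d + S n))
  by (rewrite Hk; field; auto).
field; repeat split; lra.
Qed.

Lemma expcoef_odd nu q : (nu <= q)%nat ->
  expcoef (2 * nu + 1) (q - nu) = PI * fct (2 * q) / (24 * sqrt 3 * (-96) ^ q) *
    ((- PI ^ 2 / 18) ^ nu / (fct (2 * nu) * fct (q - nu) * fct (nu + q + 1))).
Proof.
intros Hnu; destruct (Nat.le_exists_sub nu q Hnu) as [d [-> _]].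
replace (d + nu - nu)%nat with d by lia.
unfold expcoef; replace (2 * nu + 1)%nat with (S (2 * nu)) by lia; cbn [wcoef].
replace (2 * nu + 2 * d)%nat with (2 * (d + nu))%nat by lia.
replace (S (2 * nu) + d)%nat with (nu + (d + nu) + 1)%nat by lia.
replace (S (2 * nu) + 2 * d)%nat with (S (2 * (nu + d))) by lia.
pose proof (kappa_pow_scale nu d) as Hk.
replace (nu + d)%nat with (d + nu)%nat in * by lia.
rewrite fct_S, <- tech_pow_Rmult, <- (tech_pow_Rmult 48).
pose proof (fct_pos (2 * nu)); pose proof (fct_pos (nu + (d + nu) + 1)); pose proof (fct_pos d).
pose proof (fct_pos (2 * (d + nu))); pose proof (lt_0_INR (S (2 * nu)) ltac:(lia)).
pose proof sqrt3_pos.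
assert (48 ^ (2 * (d + nu)) <> 0) by (apply pow_nonzero; lra).
assert ((-96) ^ (d + nu) <> 0) by (apply pow_nonzero; lra).
replace ((- PI ^ 2 / 18) ^ nu)
  with (kappa ^ (2 * nu) * (-24) ^ d / 48 ^ (2 * (d + nu)) * (-96) ^ (d + nu))
  by (rewrite Hk; field; auto).
unfold kappa; field; repeat split; lra.
Qed.

Lemma e1_parity_coef q : e1 q = parity_coef 0 q.
Proof.
unfold parity_coef; rewrite rsum_S_l.
destruct q as [|q]; [unfold expcoef, fct; simpl; field|].
unfold expcoef at 1; cbn [wcoef Nat.eqb]; rewrite Rmult_0_r, Rplus_0_l.
unfold e1, sumRR; rewrite sum_range_rsum, <- rsum_scal_l.
replace (S (S q) - 1)%nat with (S q) by lia.
apply rsum_ext; intros i Hi; rewrite Nat.add_0_r, expcoef_even by lia; reflexivity.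
Qed.

Lemma o1_parity_coef q : o1 q = parity_coef 1 q.
Proof.
unfold o1, sumRR, parity_coef; rewrite sum_range_rsum, <- rsum_scal_l.
replace (S q - 0)%nat with (S q) by lia.
apply rsum_ext; intros nu Hnu; rewrite expcoef_odd by lia; reflexivity.
Qed.

Definition binom_trunc (y : R) (B : nat) : R := rsum B (fun k => e2 k * y ^ (2 * k)).

Definition exp_trunc (y : R) (B J : nat) : R :=
  rsum J (fun j => kappa ^ j / fct j * wpow_trunc y j B).

Definition cauchy_coef (B J m : nat) : R :=
  rsum B (fun k => rsum J (fun j => rsum B (fun i =>
    if Nat.eqb (2 * k + j + 2 * i) m then e2 k * expcoef j i else 0))).

Lemma binom_trunc_mul_exp_trunc y B J :
  binom_trunc y B * exp_trunc y B J = rsum (4 * B + J) (fun m => cauchy_coef B J m * y ^ m).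
Proof.
unfold binom_trunc, exp_trunc, cauchy_coef; rewrite <- rsum_scal_r.
transitivity (rsum B (fun k => rsum J (fun j => rsum B (fun i => rsum (4 * B + J) (fun m =>
  (if Nat.eqb (2 * k + j + 2 * i) m then e2 k * expcoef j i else 0) * y ^ m))))).
- apply rsum_ext; intros k Hk; rewrite <- rsum_scal_l; apply rsum_ext; intros j Hj.
  unfold wpow_trunc; rewrite <- !rsum_scal_l; apply rsum_ext; intros i Hi.
  rewrite (rsum_ext _ _ (fun m => if Nat.eqb m (2 * k + j + 2 * i)
                                  then e2 k * expcoef j i * y ^ m else 0)).
  + rewrite rsum_delta; destruct (Nat.ltb_spec (2 * k + j + 2 * i) (4 * B + J)); [|lia].
    unfold expcoef; rewrite !pow_add, pow_mult; pose proof (fct_pos j); field; lra.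
  + intros m _; rewrite Nat.eqb_sym; destruct (Nat.eqb m _); ring.
- set (X k j i m := (if Nat.eqb (2 * k + j + 2 * i) m then e2 k * expcoef j i else 0) * y ^ m).
  rewrite (rsum_ext B _ (fun k => rsum (4 * B + J) (fun m =>
                                 rsum J (fun j => rsum B (fun i => X k j i m))))).
  2:{ intros k _; rewrite <- (rsum_swap J (4 * B + J)).
      apply rsum_ext; intros j _; apply rsum_swap. }
  rewrite rsum_swap; apply rsum_ext; intros m _; unfold X; rewrite <- rsum_scal_r.
  apply rsum_ext; intros k _; rewrite <- rsum_scal_r.
  apply rsum_ext; intros j _; rewrite <- rsum_scal_r; reflexivity.
Qed.

Lemma cauchy_coef_collapse B J m : (m < J)%nat ->
  cauchy_coef B J m = rsum B (fun k => rsum B (fun i =>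
    if Nat.leb (2 * k + 2 * i) m then e2 k * expcoef (m - 2 * k - 2 * i) i else 0)).
Proof.
intros HmJ; unfold cauchy_coef; apply rsum_ext; intros k _; rewrite rsum_swap.
apply rsum_ext; intros i _; destruct (Nat.leb_spec (2 * k + 2 * i) m).
- rewrite (rsum_ext J _ (fun j => if Nat.eqb j (m - 2 * k - 2 * i)
                                  then e2 k * expcoef j i else 0)).
  + rewrite rsum_delta; destruct (Nat.ltb_spec (m - 2 * k - 2 * i) J); [reflexivity|lia].
  + intros j _; destruct (Nat.eqb_spec (2 * k + j + 2 * i) m),
      (Nat.eqb_spec j (m - 2 * k - 2 * i)); try lia; reflexivity.
- rewrite (rsum_ext J _ (fun _ => 0)), rsum_0; [reflexivity|].
  intros j _; destruct (Nat.eqb_spec (2 * k + j + 2 * i) m); [lia|reflexivity].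
Qed.

Lemma cauchy_coef_parity B J p r : (r <= 1)%nat -> (2 * p + r < J)%nat -> (p < B)%nat ->
  cauchy_coef B J (2 * p + r) = rsum (S p) (fun k => e2 k * parity_coef r (p - k)).
Proof.
intros Hr HJ HB; rewrite cauchy_coef_collapse by exact HJ.
rewrite <- (rsum_trunc (S p) B) by lia; apply rsum_ext; intros k _.
destruct (Nat.ltb_spec k (S p)) as [Hk|Hk].
- unfold parity_coef; rewrite (rsum_rev (S (p - k))), <- rsum_scal_l.
  rewrite <- (rsum_trunc (S (p - k)) B) by lia.
  apply rsum_ext; intros i _.
  destruct (Nat.leb_spec (2 * k + 2 * i) (2 * p + r)), (Nat.ltb_spec i (S (p - k))); try lia.
  + f_equal; f_equal; lia.
  + reflexivity.
- rewrite (rsum_ext B _ (fun _ => 0)), rsum_0; [reflexivity|].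
  intros i _; destruct (Nat.leb_spec (2 * k + 2 * i) (2 * p + r)); [lia|reflexivity].
Qed.

Lemma sumRR_convolution f g p :
  sumRR 0 p (fun k => f k * g (p - k)%nat) = rsum (S p) (fun k => g k * f (p - k)%nat).
Proof.
unfold sumRR; rewrite sum_range_rsum, Nat.sub_0_r, rsum_rev.
apply rsum_ext; intros k Hk; rewrite Rmult_comm; f_equal; f_equal; lia.
Qed.

Lemma cauchy_coef_bstar B J m : (m < J)%nat -> (m < 2 * B)%nat -> cauchy_coef B J m = bstar m.
Proof.
intros HJ HB; unfold bstar.
destruct (Nat.Even_or_Odd m) as [[p ->]|[p ->]].
- rewrite Nat.even_even, Nat.div2_double, <- (Nat.add_0_r (2 * p)), cauchy_coef_parity by lia.
  unfold e1s; rewrite sumRR_convolution; apply rsum_ext; intros k _.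
  rewrite e1_parity_coef; reflexivity.
- rewrite Nat.even_odd, Nat.div2_odd', cauchy_coef_parity by lia.
  unfold o1s; rewrite sumRR_convolution; apply rsum_ext; intros k _.
  rewrite o1_parity_coef; reflexivity.
Qed.

(** * Bounding the coefficients *)

Lemma fct_le_pow2_mul a b : fct (a + b) <= 2 ^ (a + b) * fct a * fct b.
Proof.
pose proof (binomial 1 1 (a + b)) as Hbin; rewrite sum_f_R0_rsum in Hbin.
replace (1 + 1) with 2 in Hbin by ring.
assert (HC : forall i, 0 <= Binomial.C (a + b) i * 1 ^ i * 1 ^ (a + b - i)).
{ intros i; rewrite !pow1, !Rmult_1_r; unfold Binomial.C.
  apply Rmult_le_pos; [apply pos_INR|].
  left; apply Rinv_0_lt_compat, Rmult_lt_0_compat; apply fct_pos. }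
pose proof (rsum_term_le (S (a + b)) _ a HC ltac:(lia)) as Ha.
rewrite <- Hbin, !pow1, !Rmult_1_r in Ha; unfold Binomial.C in Ha.
replace (a + b - a)%nat with b in Ha by lia; fold (fct (a + b)) (fct a) (fct b) in Ha.
pose proof (fct_pos a); pose proof (fct_pos b).
apply (Rmult_le_reg_r (/ (fct a * fct b))); [apply Rinv_0_lt_compat, Rmult_lt_0_compat; lra|].
replace (2 ^ (a + b) * fct a * fct b * / (fct a * fct b)) with (2 ^ (a + b)) by (field; lra).
exact Ha.
Qed.

Lemma Rabs_wcoef_le j i : (1 <= j)%nat -> Rabs (wcoef j i) <= / 24 ^ (j + i).
Proof.
intros Hj; destruct j as [|j]; [lia|]; cbn [wcoef].
set (n := (S j + 2 * i)%nat).
pose proof (fct_pos (j + 2 * i)); pose proof (fct_pos i); pose proof (fct_pos (S j + i)).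
assert (Hnum : 0 <= INR (S j) * fct (j + 2 * i) <= fct n).
{ split; [apply Rmult_le_pos; [apply pos_INR|lra]|].
  unfold n; replace (S j + 2 * i)%nat with (S (j + 2 * i)) by lia; rewrite fct_S.
  apply Rmult_le_compat_r; [lra|apply le_INR; lia]. }
pose proof (fct_le_pow2_mul i (S j + i)) as Hbin.
replace (i + (S j + i))%nat with n in Hbin by (unfold n; lia).
assert (Hq : INR (S j) * fct (j + 2 * i) / (fct i * fct (S j + i)) <= 2 ^ n).
{ apply (Rmult_le_reg_r (fct i * fct (S j + i))); [apply Rmult_lt_0_compat; lra|].
  unfold Rdiv; rewrite Rmult_assoc, Rinv_l by (apply Rgt_not_eq, Rmult_lt_0_compat; lra). lra. }
assert (H48 : 48 ^ n = 2 ^ n * 24 ^ i * 24 ^ (S j + i)).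
{ rewrite Rmult_assoc, <- pow_add; replace (i + (S j + i))%nat with n by (unfold n; lia).
  rewrite <- Rpow_mult_distr; f_equal; ring. }
assert (Hq0 : 0 <= INR (S j) * fct (j + 2 * i) / (fct i * fct (S j + i)))
  by (apply Rmult_le_pos; [lra|left; apply Rinv_0_lt_compat, Rmult_lt_0_compat; lra]).
set (q := INR (S j) * fct (j + 2 * i) / (fct i * fct (S j + i))) in *.
unfold Rdiv; rewrite !Rabs_mult, Rabs_inv, <- RPow_abs, (Rabs_left (-24)) by lra.
rewrite (Rabs_pos_eq q), (Rabs_pos_eq (48 ^ n)), H48 by (try apply pow_le; lra).
replace (- -24) with 24 by ring.
pose proof (pow_lt 2 n ltac:(lra)); pose proof (pow_lt 24 i ltac:(lra)).
pose proof (pow_lt 24 (S j + i) ltac:(lra)).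
apply Rle_trans with (2 ^ n * 24 ^ i * / (2 ^ n * 24 ^ i * 24 ^ (S j + i))).
- assert (0 < 2 ^ n * 24 ^ i * 24 ^ (S j + i))
    by (apply Rmult_lt_0_compat; [apply Rmult_lt_0_compat|]; assumption).
  apply Rmult_le_compat_r; [left; apply Rinv_0_lt_compat; assumption|].
  apply Rmult_le_compat_r; [lra|exact Hq].
- right; field; lra.
Qed.

Definition rho : R := sqrt (5 / 96).

Definition xi : R := kappa / (24 * rho).

Definition phi (j : nat) : R := xi ^ j / fct j.

Definition psi (j i : nat) : R :=
  match j with O => if Nat.eqb i 0 then 1 else 0 | S _ => phi j * (4 / 5) ^ i end.

Lemma kappa_pos : 0 < kappa.
Proof. unfold kappa; pose proof sqrt3_pos; pose proof PI_RGT_0; apply Rdiv_lt_0_compat; lra. Qed.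

Lemma rho_pos : 0 < rho.
Proof. apply sqrt_lt_R0; lra. Qed.

Lemma rho_sq : rho ^ 2 = 5 / 96.
Proof. unfold rho; rewrite <- Rsqr_pow2; apply Rsqr_sqrt; lra. Qed.

Lemma xi_pos : 0 < xi.
Proof. pose proof kappa_pos; pose proof rho_pos; apply Rdiv_lt_0_compat; lra. Qed.

Lemma phi_nonneg j : 0 <= phi j.
Proof. left; apply Rdiv_lt_0_compat; [apply pow_lt, xi_pos|apply fct_pos]. Qed.

Lemma psi_nonneg j i : 0 <= psi j i.
Proof.
destruct j; simpl; [destruct (Nat.eqb i 0); lra|].
apply Rmult_le_pos; [apply phi_nonneg|apply pow_le; lra].
Qed.

(* [rho^2 (4/5) = 1/24], so the factor [24^(-i)] of [Rabs_wcoef_le] is [rho^(2i) (4/5)^i]. *)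
Lemma Rabs_e2_expcoef_le k j i :
  Rabs (e2 k * expcoef j i) <= rho ^ (2 * k + j + 2 * i) * psi j i.
Proof.
pose proof rho_pos; pose proof kappa_pos.
rewrite Rabs_mult, !pow_add, (pow_mult rho 2 k), (pow_mult rho 2 i), rho_sq.
pose proof (Rabs_e2_le k); pose proof (Rabs_pos (e2 k)); pose proof (pow_lt (5 / 96) k ltac:(lra)).
destruct j as [|j].
- unfold expcoef; cbn [wcoef psi]; change (fct 0) with 1.
  destruct (Nat.eqb_spec i 0) as [->|_]; simpl; [|rewrite !Rmult_0_r, Rabs_R0; lra].
  replace (1 / 1 * 1) with 1 by field; rewrite Rabs_R1; lra.
- unfold expcoef; rewrite Rabs_mult, (Rabs_pos_eq (kappa ^ S j / fct (S j)))
    by (left; apply Rdiv_lt_0_compat; [apply pow_lt; lra|apply fct_pos]).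
  pose proof (Rabs_wcoef_le (S j) i ltac:(lia)) as Hw.
  replace ((5 / 96) ^ k * rho ^ S j * (5 / 96) ^ i * psi (S j) i)
    with ((5 / 96) ^ k * (kappa ^ S j / fct (S j) * / 24 ^ (S j + i))).
  + apply Rmult_le_compat; try (apply Rabs_pos || lra).
    * apply Rmult_le_pos; [left; apply Rdiv_lt_0_compat; [apply pow_lt|apply fct_pos]; lra|].
      apply Rabs_pos.
    * apply Rmult_le_compat_l; [|exact Hw].
      left; apply Rdiv_lt_0_compat; [apply pow_lt|apply fct_pos]; lra.
  + cbn [psi]; unfold phi.
    assert (Hi : (5 / 96) ^ i * (4 / 5) ^ i = / 24 ^ i)
      by (rewrite <- Rpow_mult_distr, <- pow_inv; f_equal; field).
    assert (Hx : rho ^ S j * xi ^ S j = kappa ^ S j / 24 ^ S j).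
    { rewrite <- Rpow_mult_distr; unfold xi, Rdiv; rewrite <- pow_inv, <- Rpow_mult_distr.
      f_equal; field; lra. }
    replace ((5 / 96) ^ k * rho ^ S j * (5 / 96) ^ i * (xi ^ S j / fct (S j) * (4 / 5) ^ i))
      with ((5 / 96) ^ k * (rho ^ S j * xi ^ S j) / fct (S j) * ((5 / 96) ^ i * (4 / 5) ^ i))
      by (pose proof (fct_pos (S j)); field; lra).
    rewrite Hi, Hx, pow_add; pose proof (fct_pos (S j)).
    field; repeat split; try lra; apply pow_nonzero; lra.
Qed.

Definition exp_parity_tail (m : nat) : R :=
  if Nat.even m then exp xi - 1 - xi else exp xi - 1 - xi ^ 2 / 2.

Lemma phi_rsum_le n : rsum n phi <= exp xi.
Proof.
destruct n as [|n]; [simpl; pose proof (exp_pos xi); lra|].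
rewrite <- sum_f_R0_rsum; apply exp_ge_taylor; left; apply xi_pos.
Qed.

Lemma phi_0 : phi 0 = 1.
Proof. unfold phi, fct; simpl; field. Qed.

Lemma phi_1 : phi 1 = xi.
Proof. unfold phi, fct; simpl; field. Qed.

Lemma phi_2 : phi 2 = xi ^ 2 / 2.
Proof. unfold phi, fct; simpl; field. Qed.

Lemma phi_even_odd_le p :
  1 + rsum p (fun k => phi (2 * k + 2)) + rsum (S p) (fun k => phi (2 * k + 1)) <= exp xi.
Proof.
eapply Rle_trans; [|apply (phi_rsum_le (2 * S p))].
rewrite rsum_even_odd, (rsum_S_l p (fun k => phi (2 * k))); change (phi (2 * 0)) with (phi 0).
rewrite phi_0, (rsum_ext _ (fun k => phi (2 * S k)) (fun k => phi (2 * k + 2)))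
  by (intros; f_equal; lia).
lra.
Qed.

Lemma phi_even_rsum_le p : rsum p (fun k => phi (2 * k + 2)) <= exp xi - 1 - xi.
Proof.
pose proof (phi_even_odd_le p) as H; rewrite rsum_S_l in H.
change (phi (2 * 0 + 1)) with (phi 1) in H; rewrite phi_1 in H.
pose proof (rsum_nonneg p (fun k => phi (2 * S k + 1)) (fun k _ => phi_nonneg _)); lra.
Qed.

Lemma phi_odd_rsum_le p : rsum p (fun k => phi (2 * k + 1)) <= exp xi - 1 - xi ^ 2 / 2.
Proof.
pose proof (phi_even_odd_le (S p)) as H.
change (rsum (S (S p)) (fun k => phi (2 * k + 1)))
  with (rsum p (fun k => phi (2 * k + 1)) + phi (2 * p + 1) + phi (2 * S p + 1)) in H.
rewrite (rsum_S_l p (fun k => phi (2 * k + 2))) in H; change (phi (2 * 0 + 2)) with (phi 2) in H.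
rewrite phi_2 in H.
pose proof (rsum_nonneg p (fun k => phi (2 * S k + 2)) (fun k _ => phi_nonneg _)).
pose proof (phi_nonneg (2 * p + 1)); pose proof (phi_nonneg (2 * S p + 1)); lra.
Qed.

Lemma parity_tail_le r B :
  rsum B (fun k => if Nat.ltb (2 * k) r then phi (r - 2 * k) else 0) <= exp_parity_tail r.
Proof.
unfold exp_parity_tail; destruct (Nat.Even_or_Odd r) as [[p ->]|[p ->]].
- rewrite Nat.even_even.
  rewrite (rsum_ext B _ (fun k => if Nat.ltb k p then phi (2 * p - 2 * k) else 0))
    by (intros k _; destruct (Nat.ltb_spec (2 * k) (2 * p)), (Nat.ltb_spec k p);
        lia || reflexivity).
  eapply Rle_trans; [apply rsum_trunc_le; intros; apply phi_nonneg|].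
  rewrite rsum_rev; eapply Rle_trans; [|apply (phi_even_rsum_le p)].
  right; apply rsum_ext; intros k Hk; f_equal; lia.
- rewrite Nat.even_odd.
  rewrite (rsum_ext B _ (fun k => if Nat.ltb k (S p) then phi (2 * p + 1 - 2 * k) else 0))
    by (intros k _; destruct (Nat.ltb_spec (2 * k) (2 * p + 1)), (Nat.ltb_spec k (S p));
        lia || reflexivity).
  eapply Rle_trans; [apply rsum_trunc_le; intros; apply phi_nonneg|].
  rewrite rsum_rev; eapply Rle_trans; [|apply (phi_odd_rsum_le (S p))].
  right; apply rsum_ext; intros k Hk; f_equal; lia.
Qed.

Lemma exp_parity_tail_nonneg m : 0 <= exp_parity_tail m.
Proof.
pose proof (phi_rsum_le 3) as H; simpl in H; rewrite phi_0, phi_1, phi_2 in H.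
pose proof xi_pos; pose proof (pow2_ge_0 xi).
unfold exp_parity_tail; destruct (Nat.even m); lra.
Qed.

Lemma phi_parity_rsum_le B m :
  rsum B (fun k => if Nat.leb (2 * k) m then phi (m - 2 * k) else 0)
  <= (if Nat.even m then 1 else 0) + exp_parity_tail m.
Proof.
set (one_if_even := if Nat.even m then 1 else 0).
assert (H01 : 0 <= one_if_even <= 1) by (unfold one_if_even; destruct (Nat.even m); lra).
apply Rle_trans with (rsum B (fun k => (if Nat.ltb (2 * k) m then phi (m - 2 * k) else 0)
                      + (if Nat.eqb k (Nat.div2 m) then one_if_even else 0))).
- apply rsum_le; intros k _.
  destruct (Nat.leb_spec (2 * k) m), (Nat.ltb_spec (2 * k) m), (Nat.eqb_spec k (Nat.div2 m));
    try lra; try (pose proof (phi_nonneg (m - 2 * k)); lra); try lia.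
  + assert (m = 2 * k)%nat as -> by lia.
    unfold one_if_even; rewrite Nat.even_even, Nat.sub_diag, phi_0; lra.
  + assert (m = 2 * k)%nat as -> by lia; rewrite Nat.div2_double in *; lia.
- rewrite rsum_add, rsum_delta.
  pose proof (parity_tail_le m B); destruct (Nat.ltb (Nat.div2 m) B); lra.
Qed.

Lemma psi_S_rsum_le B m i :
  rsum B (fun k => if Nat.leb (2 * k + 2 * S i) m then psi (m - 2 * k - 2 * S i) (S i) else 0)
  <= (4 / 5) ^ S i * exp_parity_tail m.
Proof.
assert (Hq : 0 <= (4 / 5) ^ S i) by (apply pow_le; lra).
destruct (Nat.le_gt_cases (2 * S i) m) as [Hm|Hm].
- set (r := (m - 2 * S i)%nat).
  assert (Hpar : Nat.even r = Nat.even m)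
    by (unfold r; rewrite <- (Nat.even_add_mul_2 _ (S i)); f_equal; lia).
  replace (exp_parity_tail m) with (exp_parity_tail r)
    by (unfold exp_parity_tail; now rewrite Hpar).
  rewrite (rsum_ext B _ (fun k =>
    (4 / 5) ^ S i * (if Nat.ltb (2 * k) r then phi (r - 2 * k) else 0))).
  + rewrite rsum_scal_l; apply Rmult_le_compat_l; [exact Hq|apply parity_tail_le].
  + intros k _; destruct (Nat.leb_spec (2 * k + 2 * S i) m), (Nat.ltb_spec (2 * k) r);
      try (unfold r in *; lia); [| |ring].
    * replace (m - 2 * k - 2 * S i)%nat with (r - 2 * k)%nat by (unfold r; lia).
      destruct (r - 2 * k)%nat eqn:E; [lia|]; cbn [psi]; ring.
    * replace (m - 2 * k - 2 * S i)%nat with 0%nat by (unfold r in *; lia); cbn [psi Nat.eqb]; ring.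
- rewrite (rsum_ext B _ (fun _ => 0)), rsum_0.
  + pose proof (exp_parity_tail_nonneg m); nra.
  + intros k _; destruct (Nat.leb_spec (2 * k + 2 * S i) m); [lia|reflexivity].
Qed.

Lemma psi_0_r j : psi j 0 = phi j.
Proof. destruct j; simpl; [rewrite phi_0|]; ring. Qed.

Lemma psi_rsum_le B m i :
  rsum B (fun k => if Nat.leb (2 * k + 2 * i) m then psi (m - (2 * k + 2 * i)) i else 0)
  <= (if Nat.eqb i 0 then (if Nat.even m then 1 else 0) else 0) + (4 / 5) ^ i * exp_parity_tail m.
Proof.
destruct i as [|i]; cbn [Nat.eqb].
- rewrite pow_O, Rmult_1_l; eapply Rle_trans; [|apply (phi_parity_rsum_le B m)].
  right; apply rsum_ext; intros k _; rewrite Nat.add_0_r, psi_0_r; reflexivity.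
- rewrite Rplus_0_l; eapply Rle_trans; [|apply (psi_S_rsum_le B m i)].
  right; apply rsum_ext; intros k _; rewrite Nat.sub_add_distr; reflexivity.
Qed.

Lemma Rabs_cauchy_coef_le B J m :
  Rabs (cauchy_coef B J m) <= rho ^ m * ((if Nat.even m then 1 else 0) + 5 * exp_parity_tail m).
Proof.
pose proof (pow_lt rho m rho_pos) as Hrm.
apply Rle_trans with (rho ^ m * rsum B (fun k => rsum B (fun i =>
  rsum J (fun j => if Nat.eqb (j + (2 * k + 2 * i)) m then psi j i else 0)))).
{ unfold cauchy_coef; rewrite <- rsum_scal_l.
  eapply Rle_trans; [apply Rabs_rsum_le|]; apply rsum_le; intros k _.
  rewrite rsum_swap, <- rsum_scal_l.
  eapply Rle_trans; [apply Rabs_rsum_le|]; apply rsum_le; intros i _.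
  rewrite <- rsum_scal_l.
  eapply Rle_trans; [apply Rabs_rsum_le|]; apply rsum_le; intros j _.
  destruct (Nat.eqb_spec (2 * k + j + 2 * i) m) as [<-|Hne].
  - replace (j + (2 * k + 2 * i))%nat with (2 * k + j + 2 * i)%nat by lia.
    rewrite Nat.eqb_refl; apply Rabs_e2_expcoef_le.
  - replace (Nat.eqb (j + (2 * k + 2 * i)) m) with false
      by (symmetry; apply Nat.eqb_neq; lia).
    rewrite Rabs_R0, Rmult_0_r; lra. }
apply Rmult_le_compat_l; [lra|].
apply Rle_trans with (rsum B (fun i => rsum B (fun k =>
  if Nat.leb (2 * k + 2 * i) m then psi (m - (2 * k + 2 * i)) i else 0))).
{ rewrite rsum_swap; apply rsum_le; intros i _; apply rsum_le; intros k _.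
  apply rsum_delta_le; intros; apply psi_nonneg. }
eapply Rle_trans; [apply rsum_le; intros i _; apply psi_rsum_le|].
rewrite rsum_add, rsum_scal_r, rsum_delta.
change (rsum B (pow (4 / 5))) with (rsum B (fun i => (4 / 5) ^ i)).
pose proof (rsum_geom_le B (4 / 5) ltac:(lra)); pose proof (exp_parity_tail_nonneg m).
assert (rsum B (fun i => (4 / 5) ^ i) * exp_parity_tail m <= 5 * exp_parity_tail m)
  by (apply Rmult_le_compat_r; lra).
destruct (Nat.ltb 0 B), (Nat.even m); lra.
Qed.

Lemma PI_bounds : 3.14159 < PI < 3.1416.
Proof.
destruct (PI_2_3_7_ineq 3) as [H1 H2].
unfold tg_alt, PI_2_3_7_tg, Ratan_seq in *; simpl in *; lra.
Qed.

Lemma rho_bounds : 1 / 5 <= rho <= 1 / 4.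
Proof. pose proof rho_pos; pose proof rho_sq; simpl in *; split; nra. Qed.

Lemma kappa_le_4 : kappa <= 4.
Proof.
unfold kappa; pose proof PI_bounds; pose proof sqrt3_pos; pose proof (sqrt_sqrt 3 ltac:(lra)).
apply (Rmult_le_reg_r (sqrt 3)); [lra|]; unfold Rdiv; rewrite Rmult_assoc, Rinv_l by lra; nra.
Qed.

Lemma exp_le_2 t : 0 <= t <= 1 / 2 -> exp t <= 2.
Proof.
intros Ht; pose proof (exp_ineq1_le (- t)) as H; pose proof (exp_pos t).
rewrite exp_Ropp in H; apply (Rmult_le_reg_r (/ exp t)); [apply Rinv_0_lt_compat; lra|].
rewrite Rinv_r by lra; lra.
Qed.

Lemma pow_le_one c n : 0 <= c <= 1 -> c ^ n <= 1.
Proof. intros Hc; rewrite <- (pow1 n); apply pow_incr, Hc. Qed.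

Lemma pow_le_rho a n : 0 <= a <= 1 / 5 -> a ^ n <= rho ^ n.
Proof. intros Ha; apply pow_incr; pose proof rho_bounds; lra. Qed.

Lemma xi_sq : xi ^ 2 = 2 * PI ^ 2 / 45.
Proof.
unfold xi; pose proof rho_pos.
replace ((kappa / (24 * rho)) ^ 2) with (kappa ^ 2 / (576 * rho ^ 2)) by (simpl; field; lra).
rewrite kappa_sq, rho_sq; field.
Qed.

Lemma xi_bounds : 0.438648 <= xi ^ 2 <= 0.438652 /\ 0.66 <= xi <= 0.662309.
Proof.
rewrite xi_sq; pose proof PI_bounds; pose proof xi_pos.
assert (Hsq : 0.438648 <= 2 * PI ^ 2 / 45 <= 0.438652) by (simpl; split; nra).
split; [exact Hsq|]; rewrite <- xi_sq in Hsq; simpl in Hsq; split; nra.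
Qed.

Lemma pow_le_of_sq_le x a c k : 0 <= x <= a -> x ^ 2 <= c ->
  x ^ (2 * k) <= c ^ k /\ x ^ (2 * k + 1) <= c ^ k * a.
Proof.
intros Hx Hc; assert (Hk : x ^ (2 * k) <= c ^ k) by (rewrite pow_mult; apply pow_incr; nra).
split; [exact Hk|]; rewrite pow_add, pow_1.
apply Rmult_le_compat; [apply pow_le| | |]; lra.
Qed.

Lemma exp_xi_le : exp xi <= 1.93927.
Proof.
pose proof (exp_taylor_le xi 7 xi_pos) as [_ Hr].
destruct xi_bounds as [[A1 A2] [A3 A4]]; pose proof (exp_pos xi).
assert (F : fct 0 = 1 /\ fct 1 = 1 /\ fct 2 = 2 /\ fct 3 = 6 /\ fct 4 = 24 /\ fct 5 = 120 /\
            fct 6 = 720 /\ fct 7 = 5040 /\ fct 8 = 40320)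
  by (repeat split; rewrite ?fct_S; change (fct 0) with 1; simpl; ring).
destruct F as (F0 & F1 & F2 & F3 & F4 & F5 & F6 & F7 & F8).
cbn [rsum] in Hr; rewrite F0, F1, F2, F3, F4, F5, F6, F7, F8, pow_O, pow_1 in Hr.
set (x := xi) in *; set (a := 0.662309) in *; set (c := 0.438652) in *.
assert (Ha : 0 <= x <= a) by lra.
destruct (pow_le_of_sq_le x a c 1 Ha A2) as [_ P3].
destruct (pow_le_of_sq_le x a c 2 Ha A2) as [P4 P5].
destruct (pow_le_of_sq_le x a c 3 Ha A2) as [P6 P7].
destruct (pow_le_of_sq_le x a c 4 Ha A2) as [P8 _].
simpl (2 * _ + 1)%nat in *; simpl (2 * _)%nat in *.
assert (x ^ 8 / 40320 * exp x <= c ^ 4 / 40320 * exp x) by (apply Rmult_le_compat_r; lra).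
unfold a, c in *; simpl (_ ^ 1) in *; lra.
Qed.

Lemma coef_const_le m : (if Nat.even m then 1 else 0) + 5 * exp_parity_tail m <= 3.61.
Proof.
pose proof exp_xi_le; destruct xi_bounds as [[A1 A2] [A3 A4]].
unfold exp_parity_tail; destruct (Nat.even m); lra.
Qed.

(** * The expansion of [(1 + y^2/24)^(-5/4) exp(kappa w(y))] *)

Lemma binom_trunc_error_le y B : 0 < y -> (1 <= B)%nat ->
  Rabs (Rpower (1 + y ^ 2 / 24) (-5 / 4) - binom_trunc y B) <= (5 / 96) ^ B * y ^ (2 * B).
Proof.
intros Hy HB; destruct B as [|K]; [lia|].
assert (Hu : 0 < y ^ 2 / 24) by (apply Rdiv_lt_0_compat; [apply pow_lt|]; lra).
pose proof (binomial_taylor_le (-5 / 4) _ K Hu ltac:(pose proof (pos_INR (S K)); lra)) as HT.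
replace (binom_trunc y (S K)) with (rsum (S K) (fun k => gbinom (-5 / 4) k * (y ^ 2 / 24) ^ k)).
- eapply Rle_trans; [exact HT|].
  replace ((5 / 96) ^ S K * y ^ (2 * S K)) with ((- (-5 / 4)) ^ S K * (y ^ 2 / 24) ^ S K)
    by (rewrite pow_sqr_div; replace (5 / 96) with (- (-5 / 4) * / 24) by field;
        rewrite Rpow_mult_distr, pow_inv; field; apply pow_nonzero; lra).
  apply Rmult_le_compat_r; [apply pow_le; lra|apply Rabs_gbinom_neg_le; lra].
- unfold binom_trunc, e2; apply rsum_ext; intros k _; rewrite pow_sqr_div.
  pose proof (pow_lt 24 k ltac:(lra)); field; lra.
Qed.

Lemma binom_trunc_mul_exp_trunc_bstar N y :
  binom_trunc y (N + 2) * exp_trunc y (N + 2) (N + 3)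
  = rsum (N + 2) (fun m => bstar m * y ^ m)
    + rsum (4 * N + 9) (fun i => cauchy_coef (N + 2) (N + 3) (N + 2 + i) * y ^ (N + 2 + i)).
Proof.
rewrite binom_trunc_mul_exp_trunc.
replace (4 * (N + 2) + (N + 3))%nat with (N + 2 + (4 * N + 9))%nat by lia.
rewrite rsum_add_len; f_equal; apply rsum_ext; intros m Hm.
rewrite cauchy_coef_bstar; [reflexivity|lia|lia].
Qed.

Section SmallY.

Variable y : R.
Hypothesis Hy : 0 < y <= 1 / 100.

Lemma Rabs_binom_trunc_le B : Rabs (binom_trunc y B) <= 2.
Proof.
unfold binom_trunc; eapply Rle_trans; [apply Rabs_rsum_le|].
apply Rle_trans with (rsum B (fun k => (5 / 96 * y ^ 2) ^ k)).
- apply rsum_le; intros k _; rewrite Rabs_mult, (Rabs_pos_eq (y ^ (2 * k))) by (apply pow_le; lra).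
  rewrite Rpow_mult_distr, pow_mult.
  apply Rmult_le_compat_r; [apply pow_le, pow2_ge_0|apply Rabs_e2_le].
- assert (Hq : 0 <= 5 / 96 * y ^ 2 <= 1 / 2) by (simpl; split; nra).
  eapply Rle_trans; [apply rsum_geom_le; lra|].
  apply Rle_trans with (/ (1 / 2)); [apply Rinv_le_contravar; lra|lra].
Qed.

Lemma kappa_wfun_bounds : 0 < kappa * wfun y <= kappa * y / 48.
Proof.
destruct (wfun_spec y ltac:(lra)) as [[Hw0 Hw1] _]; pose proof kappa_pos.
split; [nra|]; unfold Rdiv; rewrite Rmult_assoc; apply Rmult_le_compat_l; lra.
Qed.

Lemma exp_kappa_wfun_le : exp (kappa * wfun y) <= 2.
Proof. pose proof kappa_wfun_bounds; pose proof kappa_le_4; apply exp_le_2; nra. Qed.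

Lemma exp_taylor_kappa_wfun_le J :
  0 <= exp (kappa * wfun y) - rsum (S J) (fun j => (kappa * wfun y) ^ j / fct j)
  <= 2 * (kappa * y / 48) ^ S J.
Proof.
pose proof kappa_wfun_bounds as Hkw; pose proof exp_kappa_wfun_le as He.
set (x := kappa * wfun y) in *.
pose proof (exp_taylor_le x J ltac:(lra)) as [H0 H1]; split; [exact H0|].
eapply Rle_trans; [exact H1|]; rewrite Rmult_comm.
assert (Hf : 1 <= fct (S J)) by (apply (le_INR 1), lt_O_fact).
assert (Hq : 0 <= x ^ S J / fct (S J) <= (kappa * y / 48) ^ S J).
{ split; [apply Rmult_le_pos; [apply pow_le; lra|left; apply Rinv_0_lt_compat; lra]|].
  apply Rle_trans with (x ^ S J); [|apply pow_incr; lra].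
  apply (Rmult_le_reg_r (fct (S J))); [lra|].
  unfold Rdiv; rewrite Rmult_assoc, Rinv_l by lra; pose proof (pow_le x (S J) ltac:(lra)); nra. }
apply Rmult_le_compat; lra || (left; apply exp_pos).
Qed.

Lemma exp_trunc_rem_decomp B J :
  rsum J (fun j => (kappa * wfun y) ^ j / fct j)
  = exp_trunc y B J + rsum J (fun j => kappa ^ j / fct j * wpow_rem y j B).
Proof.
unfold exp_trunc; rewrite <- rsum_add; apply rsum_ext; intros j _.
unfold wpow_rem; rewrite Rpow_mult_distr; pose proof (fct_pos j); field; lra.
Qed.

Lemma Rabs_wpow_rem_rsum_le B J :
  Rabs (rsum J (fun j => kappa ^ j / fct j * wpow_rem y j B)) <= 2 * (y ^ 2 / 24) ^ B.
Proof.
assert (Hu : 0 <= (y ^ 2 / 24) ^ B) by (apply pow_le, Rmult_le_pos; [apply pow2_ge_0|lra]).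
pose proof kappa_pos; pose proof kappa_le_4.
eapply Rle_trans; [apply Rabs_rsum_le|].
apply Rle_trans with (rsum J (fun j => (1 / 2) ^ j * (y ^ 2 / 24) ^ B)).
- apply rsum_le; intros j _.
  rewrite Rabs_mult, (Rabs_pos_eq (kappa ^ j / fct j))
    by (left; apply Rdiv_lt_0_compat; [apply pow_lt; lra|apply fct_pos]).
  pose proof (Rabs_wpow_rem_le y j B ltac:(lra)) as HR.
  assert (Hf : 1 <= fct j) by (apply (le_INR 1), lt_O_fact).
  assert (Hk : kappa ^ j / fct j <= kappa ^ j).
  { apply (Rmult_le_reg_r (fct j)); [lra|]; pose proof (pow_lt kappa j ltac:(lra)).
    unfold Rdiv; rewrite Rmult_assoc, Rinv_l by lra; nra. }
  apply Rle_trans with (kappa ^ j * ((y / 9) ^ j * (y ^ 2 / 24) ^ B)).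
  + apply Rmult_le_compat; try lra; [|apply Rabs_pos].
    left; apply Rdiv_lt_0_compat; [apply pow_lt; lra|apply fct_pos].
  + rewrite <- Rmult_assoc, <- Rpow_mult_distr; apply Rmult_le_compat_r; [exact Hu|].
    apply pow_incr; split; [apply Rmult_le_pos|]; nra.
- rewrite rsum_scal_r; apply Rmult_le_compat_r; [exact Hu|].
  eapply Rle_trans; [apply rsum_geom_le|]; lra.
Qed.

Lemma Rabs_cauchy_tail_le B J n L :
  Rabs (rsum L (fun i => cauchy_coef B J (n + i) * y ^ (n + i)))
  <= 3.61 * (rho * y) ^ n / (1 - rho * y).
Proof.
pose proof rho_pos; pose proof rho_bounds.
assert (Ha : 0 < rho * y <= 1 / 400) by (split; nra).
eapply Rle_trans; [apply Rabs_rsum_le|].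
apply Rle_trans with (rsum L (fun i => 3.61 * (rho * y) ^ n * (rho * y) ^ i)).
- apply rsum_le; intros i _; rewrite Rabs_mult, (Rabs_pos_eq (y ^ _)) by (apply pow_le; lra).
  rewrite Rmult_assoc, <- pow_add, Rpow_mult_distr, <- Rmult_assoc.
  apply Rmult_le_compat_r; [apply pow_le; lra|].
  eapply Rle_trans; [apply Rabs_cauchy_coef_le|]; rewrite Rmult_comm.
  apply Rmult_le_compat_r; [apply pow_le; lra|apply coef_const_le].
- rewrite rsum_scal_l; unfold Rdiv; apply Rmult_le_compat_l.
  + apply Rmult_le_pos; [lra|apply pow_le; lra].
  + apply rsum_geom_le; lra.
Qed.

Lemma binom_trunc_error_small N :
  Rabs (Rpower (1 + y ^ 2 / 24) (-5 / 4) - binom_trunc y (N + 2)) <= rho ^ N * y ^ (N + 2) / 1000.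
Proof.
eapply Rle_trans; [apply binom_trunc_error_le; lra || lia|].
pose proof rho_bounds; pose proof rho_pos.
replace ((5 / 96) ^ (N + 2) * y ^ (2 * (N + 2)))
  with (rho ^ N * y ^ (N + 2) * (rho ^ (N + 4) * (y ^ N * y ^ 2))).
- pose proof (pow_le rho N ltac:(lra)); pose proof (pow_le y (N + 2) ltac:(lra)).
  assert (0 <= rho ^ (N + 4) <= 1) by (split; [apply pow_le|apply pow_le_one]; lra).
  assert (0 <= y ^ N <= 1) by (split; [apply pow_le|apply pow_le_one]; lra).
  assert (0 <= y ^ 2 <= 1 / 1000) by (simpl; split; nra).
  assert (0 <= y ^ N * y ^ 2 <= 1 / 1000) by (split; nra).
  assert (rho ^ (N + 4) * (y ^ N * y ^ 2) <= 1 / 1000) by nra.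
  replace (rho ^ N * y ^ (N + 2) / 1000) with (rho ^ N * y ^ (N + 2) * (1 / 1000)) by field.
  apply Rmult_le_compat_l; [apply Rmult_le_pos|]; lra.
- rewrite <- rho_sq, <- !pow_mult; replace (2 * (N + 2))%nat with (N + (N + 4))%nat by lia.
  rewrite !pow_add; ring.
Qed.

Lemma Rabs_wpow_rem_rsum_small N J :
  Rabs (rsum J (fun j => kappa ^ j / fct j * wpow_rem y j (N + 2)))
  <= 2 * (rho ^ N * y ^ (N + 2) / 1000).
Proof.
eapply Rle_trans; [apply Rabs_wpow_rem_rsum_le|]; apply Rmult_le_compat_l; [lra|].
replace (y ^ 2 / 24) with (y * (y / 24)) by (simpl; field).
rewrite Rpow_mult_distr, (pow_add (y / 24) N 2).
pose proof (pow_le_rho (y / 24) N ltac:(lra)); pose proof (pow_le (y / 24) N ltac:(lra)).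
pose proof (pow_le y (N + 2) ltac:(lra)).
assert ((y / 24) ^ 2 <= 1 / 1000) by (simpl; nra).
assert (0 <= (y / 24) ^ 2) by apply pow2_ge_0.
replace (rho ^ N * y ^ (N + 2) / 1000) with (y ^ (N + 2) * (rho ^ N * (1 / 1000))) by field.
apply Rmult_le_compat_l; [lra|]; apply Rmult_le_compat; lra.
Qed.

Lemma exp_taylor_kappa_wfun_small N :
  Rabs (exp (kappa * wfun y) - rsum (N + 3) (fun j => (kappa * wfun y) ^ j / fct j))
  <= 2 * (rho ^ N * y ^ (N + 2) / 1000).
Proof.
replace (N + 3)%nat with (S (N + 2)) by lia.
destruct (exp_taylor_kappa_wfun_le (N + 2)) as [H0 H1]; rewrite Rabs_pos_eq by exact H0.
eapply Rle_trans; [exact H1|]; apply Rmult_le_compat_l; [lra|].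
pose proof kappa_pos; pose proof kappa_le_4.
replace (kappa * y / 48) with (kappa / 48 * y) by field.
rewrite Rpow_mult_distr.
replace ((kappa / 48) ^ S (N + 2) * y ^ S (N + 2))
  with (y ^ (N + 2) * ((kappa / 48) ^ N * ((kappa / 48) ^ 3 * y)))
  by (replace (S (N + 2)) with (N + 3)%nat by lia; rewrite !pow_add; ring).
pose proof (pow_le_rho (kappa / 48) N ltac:(split; [apply Rmult_le_pos|]; lra)).
pose proof (pow_le (kappa / 48) N ltac:(apply Rmult_le_pos; lra)).
pose proof (pow_le y (N + 2) ltac:(lra)).
assert (0 <= (kappa / 48) ^ 3 * y <= 1 / 1000).
{ assert ((kappa / 48) ^ 3 <= (1 / 12) ^ 3) by (apply pow_incr; split; [apply Rmult_le_pos|]; lra).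
  assert (0 <= (kappa / 48) ^ 3) by (apply pow_le, Rmult_le_pos; lra).
  simpl in *; split; nra. }
replace (rho ^ N * y ^ (N + 2) / 1000) with (y ^ (N + 2) * (rho ^ N * (1 / 1000))) by field.
apply Rmult_le_compat_l; [lra|]; apply Rmult_le_compat; lra.
Qed.

(* [rho y <= 1/400] and [3.61 (5/96) / (1 - 1/400) < 0.19]. *)
Lemma Rabs_cauchy_tail_small N B J L :
  Rabs (rsum L (fun i => cauchy_coef B J (N + 2 + i) * y ^ (N + 2 + i)))
  <= 19 / 100 * (rho ^ N * y ^ (N + 2)).
Proof.
pose proof rho_pos; pose proof rho_bounds.
pose proof (pow_le rho N ltac:(lra)); pose proof (pow_le y (N + 2) ltac:(lra)).
eapply Rle_trans; [apply Rabs_cauchy_tail_le|].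
replace ((rho * y) ^ (N + 2)) with (5 / 96 * (rho ^ N * y ^ (N + 2)))
  by (rewrite Rpow_mult_distr, !pow_add, <- rho_sq; ring).
assert (Hinv : / (1 - rho * y) <= 400 / 399)
  by (rewrite <- (Rinv_div 399 400); apply Rinv_le_contravar; nra).
set (Z := rho ^ N * y ^ (N + 2)); assert (0 <= Z) by (unfold Z; nra).
apply Rle_trans with (3.61 * (5 / 96 * Z) * (400 / 399)); [|lra].
unfold Rdiv; apply Rmult_le_compat_l; [lra|exact Hinv].
Qed.

Lemma expansion_error_le N :
  Rabs (Rpower (1 + y ^ 2 / 24) (-5 / 4) * exp (kappa * wfun y)
        - rsum (N + 2) (fun m => bstar m * y ^ m))
  <= 2 / 10 * rho ^ N * y ^ (N + 2).
Proof.
set (Z := rho ^ N * y ^ (N + 2)).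
set (rA := Rpower (1 + y ^ 2 / 24) (-5 / 4) - binom_trunc y (N + 2)).
set (rS := rsum (N + 3) (fun j => kappa ^ j / fct j * wpow_rem y j (N + 2))).
set (rE := exp (kappa * wfun y) - rsum (N + 3) (fun j => (kappa * wfun y) ^ j / fct j)).
set (T := rsum (4 * N + 9) (fun i => cauchy_coef (N + 2) (N + 3) (N + 2 + i) * y ^ (N + 2 + i))).
assert (HZ : 0 <= Z) by (pose proof rho_pos; apply Rmult_le_pos; apply pow_le; lra).
pose proof (binom_trunc_error_small N) as HrA; fold Z rA in HrA.
pose proof (Rabs_wpow_rem_rsum_small N (N + 3)) as HrS; fold Z rS in HrS.
pose proof (exp_taylor_kappa_wfun_small N) as HrE; fold Z rE in HrE.
pose proof (Rabs_cauchy_tail_small N (N + 2) (N + 3) (4 * N + 9)) as HT; fold Z T in HT.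
replace (_ - _) with (T + binom_trunc y (N + 2) * (rS + rE) + rA * exp (kappa * wfun y)).
2:{ pose proof (exp_trunc_rem_decomp (N + 2) (N + 3)) as Hdec; fold rS in Hdec.
    pose proof (binom_trunc_mul_exp_trunc_bstar N y) as Hprod; fold T in Hprod.
    unfold rE, rA; rewrite Hdec.
    replace (rsum (N + 2) (fun m => bstar m * y ^ m))
      with (binom_trunc y (N + 2) * exp_trunc y (N + 2) (N + 3) - T) by lra.
    ring. }
assert (HAb : Rabs (binom_trunc y (N + 2) * (rS + rE)) <= 2 * (4 * (Z / 1000))).
{ rewrite Rabs_mult; apply Rmult_le_compat; try apply Rabs_pos; [apply Rabs_binom_trunc_le|].
  eapply Rle_trans; [apply Rabs_triang|lra]. }
assert (HAE : Rabs (rA * exp (kappa * wfun y)) <= Z / 1000 * 2).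
{ rewrite Rabs_mult, (Rabs_pos_eq (exp _)) by (left; apply exp_pos).
  apply Rmult_le_compat; try apply Rabs_pos; [left; apply exp_pos|exact HrA|].
  apply exp_kappa_wfun_le. }
replace (2 / 10 * rho ^ N * y ^ (N + 2)) with (2 / 10 * Z) by (unfold Z; ring).
eapply Rle_trans; [apply Rabs_triang|]; eapply Rle_trans; [apply Rplus_le_compat_r, Rabs_triang|].
lra.
Qed.

End SmallY.

Lemma ln_sqrt x : 0 < x -> ln (sqrt x) = ln x / 2.
Proof. intros Hx; rewrite <- Rpower_sqrt, ln_Rpower by exact Hx; field. Qed.

Lemma inv_sqrt_sq x : 0 < x -> (/ sqrt x) ^ 2 = / x.
Proof. intros Hx; rewrite pow_inv, <- Rsqr_pow2, Rsqr_sqrt; lra. Qed.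

Lemma sqrt_24 : sqrt 24 = 2 * sqrt 2 * sqrt 3.
Proof.
replace 24 with ((2 * 2) * (2 * 3)) by ring.
rewrite sqrt_mult, sqrt_square, sqrt_mult by lra; ring.
Qed.

Lemma exponent_eq x : 0 < x ->
  PI / (3 * sqrt 2) * sqrt (24 * x + 1) = kappa * wfun (/ sqrt x) + 2 * PI * sqrt (x / 3).
Proof.
intros Hx; pose proof (sqrt_lt_R0 x Hx) as Hsx; pose proof (sqrt_lt_R0 2 ltac:(lra)).
pose proof sqrt3_pos; pose proof (sqrt_sqrt 3 ltac:(lra)) as H33.
set (v := 1 + (/ sqrt x) ^ 2 / 24).
assert (Hv : 24 * x + 1 = 24 * x * v) by (unfold v; rewrite inv_sqrt_sq by lra; field; lra).
assert (Hv0 : 0 < v) by (unfold v; pose proof (pow2_ge_0 (/ sqrt x)); lra).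
rewrite Hv, !sqrt_mult, sqrt_div_alt, sqrt_24 by lra.
unfold wfun, kappa; fold v.
replace (3 * sqrt 2) with (sqrt 3 * sqrt 3 * sqrt 2) by (rewrite H33; ring).
field; repeat split; lra.
Qed.

Lemma exp_ratio_eq x : 0 < x ->
  exp (PI / (3 * sqrt 2) * sqrt (24 * x + 1)) / exp (2 * PI * sqrt (x / 3))
  = exp (kappa * wfun (/ sqrt x)).
Proof.
intros Hx; rewrite exponent_eq, exp_plus by exact Hx.
pose proof (exp_pos (2 * PI * sqrt (x / 3))); field; lra.
Qed.

Lemma prefactor_eq x : 0 < x ->
  8 * Rpower 3 (3 / 4) * sqrt PI * Rpower x (5 / 4)
    / ((24 * x + 1) * sqrt (PI / (6 * sqrt 2) * sqrt (24 * x + 1)))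
  = Rpower (1 + (/ sqrt x) ^ 2 / 24) (-5 / 4).
Proof.
intros Hx; pose proof PI_RGT_0; pose proof (sqrt_lt_R0 2 ltac:(lra)).
pose proof (sqrt_lt_R0 (24 * x + 1) ltac:(lra)).
assert (Hin : 0 < PI / (6 * sqrt 2) * sqrt (24 * x + 1))
  by (apply Rmult_lt_0_compat; [apply Rdiv_lt_0_compat|]; lra).
pose proof (sqrt_lt_R0 _ Hin); pose proof (sqrt_lt_R0 PI ltac:(lra)).
pose proof (exp_pos (3 / 4 * ln 3)); pose proof (exp_pos (5 / 4 * ln x)).
replace (1 + (/ sqrt x) ^ 2 / 24) with ((24 * x + 1) / (24 * x))
  by (rewrite inv_sqrt_sq by lra; field; lra).
apply ln_inv; [|apply exp_pos|].
{ apply Rdiv_lt_0_compat; repeat apply Rmult_lt_0_compat; try lra; apply exp_pos. }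
assert (H34 : 0 < Rpower 3 (3 / 4)) by apply exp_pos.
assert (Hx54 : 0 < Rpower x (5 / 4)) by apply exp_pos.
assert (La : ln (8 * Rpower 3 (3 / 4) * sqrt PI * Rpower x (5 / 4))
             = ln 8 + 3 / 4 * ln 3 + ln PI / 2 + 5 / 4 * ln x).
{ rewrite !ln_mult, !ln_Rpower, ln_sqrt; try lra; repeat apply Rmult_lt_0_compat; lra. }
assert (Ld : ln ((24 * x + 1) * sqrt (PI / (6 * sqrt 2) * sqrt (24 * x + 1)))
             = ln (24 * x + 1) + (ln PI - (ln 6 + ln 2 / 2) + ln (24 * x + 1) / 2) / 2).
{ rewrite ln_mult, ln_sqrt, ln_mult, ln_div, ln_mult, !ln_sqrt; try lra.
  apply Rdiv_lt_0_compat; lra. }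
rewrite ln_Rpower, !ln_div, La, Ld, ln_mult by (repeat apply Rmult_lt_0_compat; lra).
assert (L8 : ln 8 = 3 * ln 2)
  by (replace 8 with (2 * (2 * 2)) by ring; rewrite !ln_mult by lra; ring).
assert (L6 : ln 6 = ln 2 + ln 3) by (replace 6 with (2 * 3) by ring; apply ln_mult; lra).
assert (L24 : ln 24 = ln 8 + ln 3) by (replace 24 with (8 * 3) by ring; apply ln_mult; lra).
rewrite L24, L8, L6; field.
Qed.

Lemma Rpower_half_pow a m : 0 < a -> Rpower a (INR m / 2) = sqrt a ^ m.
Proof.
intros Ha; replace (INR m / 2) with (/ 2 * INR m) by field.
rewrite <- Rpower_mult, Rpower_sqrt, Rpower_pow by (try apply sqrt_lt_R0; exact Ha); reflexivity.
Qed.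

Lemma nN_ge_10000 N : (3 <= N)%nat -> 10000 <= nN N.
Proof.
intros HN; unfold nN.
assert (HN3 : 3 <= INR N) by (apply (le_INR 3) in HN; simpl in HN; lra).
assert (HL : 1 <= ln (6 * INR N + 8)).
{ rewrite <- (ln_exp 1); left; apply ln_increasing; [apply exp_pos|pose proof exp_le_3; lra]. }
apply Rle_trans with (23 ^ 4); [simpl; lra|]; apply pow_incr; split; [lra|].
apply Rle_trans with (3 * 13 * 1 / (13 / 10) ^ 2); [simpl; lra|].
unfold Rdiv; apply Rmult_le_compat_r; [simpl; lra|]; apply Rmult_le_compat; lra.
Qed.

Section Normalization.

Variable n : nat.
Hypothesis Hn : 0 < INR n.

Let y := / sqrt (INR n).

Lemma normalized_lhs_eq :
  exp (PI / (3 * sqrt 2) * sqrt (24 * INR n + 1)) / ((24 * INR n + 1) * lam n)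
  / (exp (2 * PI * sqrt (INR n / 3)) / (8 * Rpower 3 (3 / 4) * sqrt PI * Rpower (INR n) (5 / 4)))
  = Rpower (1 + y ^ 2 / 24) (-5 / 4) * exp (kappa * wfun y).
Proof.
unfold y, lam; rewrite <- exp_ratio_eq, <- prefactor_eq by exact Hn.
pose proof PI_RGT_0; pose proof (sqrt_lt_R0 PI ltac:(lra)); pose proof (sqrt_lt_R0 2 ltac:(lra)).
assert (0 < Rpower 3 (3 / 4)) by apply exp_pos.
assert (0 < Rpower (INR n) (5 / 4)) by apply exp_pos.
assert (0 < sqrt (PI / (6 * sqrt 2) * sqrt (24 * INR n + 1))).
{ apply sqrt_lt_R0, Rmult_lt_0_compat; [apply Rdiv_lt_0_compat|apply sqrt_lt_R0]; lra. }
pose proof (exp_pos (PI / (3 * sqrt 2) * sqrt (24 * INR n + 1))).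
pose proof (exp_pos (2 * PI * sqrt (INR n / 3))).
field; repeat split; lra.
Qed.

Lemma bstar_sum_eq N :
  sumRR 0 (N + 1) (fun m => bstar m / Rpower (INR n) (INR m / 2))
  = rsum (N + 2) (fun m => bstar m * y ^ m).
Proof.
unfold sumRR, y; rewrite sum_range_rsum; replace (S (N + 1) - 0)%nat with (N + 2)%nat by lia.
apply rsum_ext; intros m _; rewrite Rpower_half_pow, pow_inv by exact Hn; reflexivity.
Qed.

Lemma error_bound_eq N :
  2 / 10 * Rpower (5 / 96) (INR N / 2) * Rpower (INR n) (- (INR N + 2) / 2)
  = 2 / 10 * rho ^ N * y ^ (N + 2).
Proof.
unfold y; rewrite Rpower_half_pow by lra; fold rho.
replace (- (INR N + 2) / 2) with (- (INR (N + 2) / 2)) by (rewrite plus_INR; simpl; field).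
rewrite Rpower_Ropp, Rpower_half_pow, pow_inv by exact Hn; reflexivity.
Qed.

End Normalization.

Lemma error_term_exists L P S b :
  0 < P -> Rabs (L / P - S) <= b -> exists E, Rabs E <= b /\ L = P * (S + E).
Proof. intros HP Hb; exists (L / P - S); split; [exact Hb|field; lra]. Qed.

Lemma inv_sqrt_small x : 10000 <= x -> 0 < / sqrt x <= 1 / 100.
Proof.
intros Hx; assert (100 <= sqrt x) by (rewrite <- (sqrt_square 100) by lra; apply sqrt_le_1; lra).
split; [apply Rinv_0_lt_compat; lra|].
apply Rle_trans with (/ 100); [apply Rinv_le_contravar; lra|lra].
Qed.

Lemma prefactor_pos x : 0 < x ->
  0 < exp (2 * PI * sqrt (x / 3)) / (8 * Rpower 3 (3 / 4) * sqrt PI * Rpower x (5 / 4)).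
Proof.
intros Hx; pose proof PI_RGT_0; pose proof (sqrt_lt_R0 PI ltac:(lra)).
apply Rdiv_lt_0_compat; [apply exp_pos|repeat apply Rmult_lt_0_compat; try lra; apply exp_pos].
Qed.

Theorem lemma3p14 (N n : nat) :
  (3 <= N)%nat -> nN N <= INR n ->
  exists E : R,
    Rabs E <= (2/10) * Rpower (5/96) (INR N / 2) * Rpower (INR n) (- (INR N + 2) / 2) /\
    exp (PI / (3 * sqrt 2) * sqrt (24 * INR n + 1)) / ((24 * INR n + 1) * lam n)
    = exp (2 * PI * sqrt (INR n / 3)) /
        (8 * Rpower 3 (3/4) * sqrt PI * Rpower (INR n) (5/4)) *
      (sumRR 0 (N + 1) (fun m => bstar m / Rpower (INR n) (INR m / 2)) + E).
Proof.
intros HN Hn; pose proof (nN_ge_10000 N HN) as Hbig.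
apply error_term_exists; [apply prefactor_pos; lra|].
rewrite normalized_lhs_eq, bstar_sum_eq, error_bound_eq by lra.
apply expansion_error_le, inv_sqrt_small; lra.
Qed.
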